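(* Let $q$ be a prime power, $n$ a positive integer, $\sigma$ a sesquilinear form of $\mathbb F_{q^{2n}}/\mathbb F_{q^2}$, and $C$ a coefficient matrix of a reduced form of $\sigma$. Then $\sigma$ has a diagonal coefficient matrix whose nonzero entries are $d_1,\dots,d_r$ if and only if $\operatorname{rad}\sigma=\operatorname{rad}\sigma^*$ and $C^*C^{-1}$ is conjugate to the diagonal matrix with diagonal entries $d_1^{q-1},\dots,d_r^{q-1}$.
   Context: A sesquilinear form of $\mathbb F_{q^{2n}}/\mathbb F_{q^2}$ is a map $\sigma:\mathbb F_{q^{2n}}^2\to\mathbb F_{q^2}$ that is $\mathbb F_{q^2}$-linear in the first argument and additive with $\sigma(u,cv)=c^q\sigma(u,v)$ ($c\in\mathbb F_{q^2}$) in the second. $\sigma^*(u,v)=\sigma(v,u)^q$. $\operatorname{rad}\sigma=\{u:\sigma(u,v)=0\ \forall v\}$. If $W$ is an $\mathbb F_{q^2}$-subspace with $\mathbb F_{q^{2n}}=W\oplus(\operatorname{rad}\sigma\cap\operatorname{rad}\sigma^* )$, the restriction of $\sigma$ to $W\times W$ is a reduced form of $\sigma$. The coefficient matrix of a form w.r.t. a basis $\beta_1,\dots,\beta_k$ of its domain has $(i,j)$ entry $\sigma(\beta_i,\beta_j)$. For a matrix $M$, $M^*$ is the transpose of $M$ with every entry raised to the $q$-th power. *)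

From HB Require Import structures.
From mathcomp Require Import all_boot all_algebra all_field.
Set Implicit Arguments. Unset Strict Implicit. Unset Printing Implicit Defensive.
Import GRing.Theory.
Local Open Scope ring_scope.

Section Sesq.
Variables (F : finFieldType) (L : fieldExtType F).

Definition sesquilinear (q : nat) (s : L -> L -> F) : Prop :=
  [/\ forall (c : F) (u v w : L), s (c *: u + v) w = c * s u w + s v w,
      forall u v w : L, s u (v + w) = s u v + s u w
    & forall (c : F) (u v : L), s u (c *: v) = c ^+ q * s u v].

Definition sstar (q : nat) (s : L -> L -> F) : L -> L -> F :=
  fun u v => (s v u) ^+ q.

Definition srad (s : L -> L -> F) (u : L) : Prop := forall v, s u v = 0.

Definition reduced_domain (q : nat) (s : L -> L -> F) (W : {vspace L}) : Prop :=
  (forall x : L, exists w y, [/\ w \in W, srad s y, srad (sstar q s) y & x = w + y])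
  /\ (forall w : L, w \in W -> srad s w -> srad (sstar q s) w -> w = 0).

Definition coefmx (s : L -> L -> F) (k : nat) (b : k.-tuple L) : 'M[F]_k :=
  \matrix_(i, j) s (tnth b i) (tnth b j).

Definition has_diag_coefmx (s : L -> L -> F) (d : seq F) : Prop :=
  exists b : (\dim (fullv : {vspace L})).-tuple L,
    [/\ basis_of fullv b,
        forall i j, i != j -> coefmx s b i j = 0
      & perm_eq [seq coefmx s b i i | i <- enum 'I_(\dim (fullv : {vspace L}))
                                    & coefmx s b i i != 0] d].
End Sesq.

Definition mx_star (F : finFieldType) (q k : nat) (M : 'M[F]_k) : 'M[F]_k :=
  map_mx (fun x => x ^+ q) M^T.

(* A is conjugate to B: A = P B P^{-1} with P invertible (sizes may a priori
   differ; invertibility of P forces them to agree) *)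
Definition mx_conj (F : fieldType) (k r : nat) (A : 'M[F]_k) (B : 'M[F]_r) : Prop :=
  exists (P : 'M[F]_(k, r)) (Q : 'M[F]_(r, k)),
    [/\ P *m Q = 1%:M, Q *m P = 1%:M & A = P *m B *m Q].

From HB Require Import structures.
From mathcomp Require Import all_boot all_algebra all_field cyclic.
From mathcomp Require Import zify.
Set Implicit Arguments. Unset Strict Implicit. Unset Printing Implicit Defensive.
Import GRing.Theory.
Local Open Scope ring_scope.

(* Let R = rad s /\ rad s^*, so that L = W (+) R and the radical vectors are orthogonal to
   everything.  A diagonal basis of L consists of isotropic vectors, which lie in R, and
   anisotropic ones, whose projections to W form an orthogonal basis of W with Gram values
   d.  If A is the change of basis from b to that orthogonal basis, then
   A C A^* = diag d and A C^* A^* = diag d^q, whence C^* C^-1 = A^-1 diag (d^(q-1)) A;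
   the symmetry of an orthogonal basis also forces rad s = rad s^*.
   Conversely, if C^* C^-1 = P diag (d_i^(q-1)) Q, the rows of Q give a basis u_i of W
   with s^*(u_i, -) = d_i^(q-1) s(u_i, -).  Because l^q = l^-1 for these eigenvalues,
   distinct eigenspaces are orthogonal; as rad s = rad s^*, each eigenspace E_l is
   therefore nondegenerate and is orthogonalized on its own: polarization (some a has
   a^q <> a) yields an anisotropic w in E_l, s(w, w)^(q-1) = l, so w can be rescaled by a
   norm c^(q+1) to any prescribed value d with d^(q-1) = l, and one recurses in the
   orthogonal complement of w.  The orthogonal basis of W so obtained, completed by a
   basis of R, is the required diagonal basis. *)

Lemma pairwise_perm (T : eqType) (r : rel T) (s t : seq T) :
  symmetric r -> perm_eq s t -> pairwise r s -> pairwise r t.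
Proof.
move=> r_sym; elim: s t => [|x s IH] t; first by rewrite perm_sym => /perm_nilP ->.
move=> pxs /andP[rx rs]; have xt : x \in t by rewrite -(perm_mem pxs) mem_head.
case/splitPr: xt pxs => t1 t2 pxs.
have ps : perm_eq s (t1 ++ t2).
  by rewrite -(perm_cons x) (perm_trans pxs) // -cat1s perm_catCA.
rewrite pairwise_cat pairwise_cons allrel_consr.
have := IH _ ps rs; rewrite pairwise_cat => /and3P[-> -> ->]; rewrite !andbT andTb.
have /allP rx' : all (r x) (t1 ++ t2) by rewrite -(perm_all _ ps).
by apply/andP; split; apply/allP => y yt; [rewrite r_sym|]; rewrite rx' // mem_cat yt ?orbT.
Qed.

Lemma perm_map_lift (T U : eqType) (x0 : T) (f : T -> U) (s : seq T) (t : seq U) :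
  perm_eq (map f s) t -> exists2 s', perm_eq s s' & map f s' = t.
Proof.
rewrite perm_sym => /(perm_iotaP (f x0)) [Is pI ->]; rewrite size_map in pI.
exists (map (nth x0 s) Is).
  by rewrite -{1}[s](mkseq_nth x0) perm_map // perm_sym.
rewrite -map_comp; apply/eq_in_map => i /=; rewrite (perm_mem pI) mem_iota => /andP[_ ?].
by rewrite (nth_map x0).
Qed.

Lemma perm_flatten_fibers (T U : eqType) (f : T -> U) (s : seq T) :
  perm_eq (flatten [seq [seq x <- s | f x == y] | y <- undup (map f s)]) s.
Proof.
suff fibers ys : uniq ys ->
    perm_eq (flatten [seq [seq x <- s | f x == y] | y <- ys]) [seq x <- s | f x \in ys].
  rewrite (perm_trans (fibers _ (undup_uniq _))) // (all_filterP _) //.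
  by apply/allP => x xs; rewrite mem_undup map_f.
elim: ys => [|y ys IH] /=; first by rewrite filter_pred0.
case/andP=> yys /IH pys; rewrite perm_sym -(perm_filterC (fun x => f x == y)) -!filter_predI.
apply: perm_cat.
  by rewrite (@eq_filter _ _ (fun x => f x == y)) // => x /=; rewrite in_cons; case: eqP.
rewrite perm_sym (perm_trans pys) // (@eq_filter _ _ (fun x => f x \in ys)) // => x /=.
by rewrite in_cons; case: eqP => [->|] //=; rewrite (negbTE yys).
Qed.

Section FrobeniusInvolution.
Variables (F : finFieldType) (q : nat).
Hypotheses (q_gt1 : (1 < q)%N) (cardF : #|F| = (q ^ 2)%N).

Lemma frobK (x : F) : x ^+ q ^+ q = x.
Proof. by rewrite -exprM -[(q * q)%N]/(q ^ 2)%N -cardF expf_card. Qed.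

Let N := (q ^ 2).-1.
Let N_gt0 : (0 < N)%N. Proof. by rewrite /N; nia. Qed.

Let exists_prim_root : exists z : F, N.-primitive_root z.
Proof.
have: has N.-primitive_root (enum (predC1 (0 : F))).
  apply: has_prim_root => //.
  - apply/allP => x; rewrite mem_enum /= => x0; rewrite unity_rootE; apply/eqP.
    apply: (mulfI x0); rewrite mulr1 -exprS prednK; first by rewrite -cardF expf_card.
    by rewrite /N; nia.
  - exact: enum_uniq.
  - by rewrite -cardE cardC1 cardF.
by case/hasP => z _ pz; exists z.
Qed.

Lemma norm_surjective (t : F) : t ^+ (q - 1) = 1 -> exists c : F, c ^+ q * c = t.
Proof.
move=> tq; have [z pz] := exists_prim_root.
have N_eq : N = ((q + 1) * (q - 1))%N by rewrite /N; nia.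
have tN : t ^+ N = 1 by rewrite N_eq mulnC exprM tq expr1n.
have [i ti] := prim_rootP pz tN; move: tq; rewrite {t tN}ti -exprM => /eqP.
rewrite -(prim_order_dvd pz) => dvdN.
have : ((q + 1) * (q - 1) %| i * (q - 1))%N by rewrite -N_eq.
rewrite dvdn_pmul2r; last by nia.
by case/dvdnP => j ->; exists (z ^+ j); rewrite -exprM -exprD mulnDr muln1.
Qed.

Lemma frob_not_id : exists a : F, a ^+ q != a.
Proof.
have [z pz] := exists_prim_root; exists z; apply/eqP => zq.
have z0 : z != 0.
  apply/eqP => z0; have := prim_expr_order pz.
  by rewrite z0 expr0n gtn_eqF // => /eqP; rewrite eq_sym oner_eq0.
have : z ^+ (q - 1) == 1 by rewrite -(can_eq (mulKf z0)) mulr1 -exprS subn1 prednK ?zq //; nia.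
by rewrite -(prim_order_dvd pz) => /dvdn_leq; rewrite /N; nia.
Qed.

End FrobeniusInvolution.

Lemma span_ind (K : fieldType) (vT : vectType K) (P : vT -> Prop) (X : seq vT) v :
  P 0 -> (forall a u w, P u -> P w -> P (a *: u + w)) ->
  {in X, forall u, P u} -> v \in <<X>>%VS -> P v.
Proof.
move=> P0 Plin PX vX; rewrite (@coord_span _ _ _ (in_tuple X) v vX).
by elim/big_rec: _ => // i x _ Px; apply: Plin => //; apply/PX/mem_nth.
Qed.

Section Sesquilinear.
Variables (F : finFieldType) (L : fieldExtType F) (q : nat) (s : L -> L -> F).
Hypotheses (s_sesq : sesquilinear q s) (q_gt1 : (1 < q)%N).
Hypothesis frobD : forall x y : F, (x + y) ^+ q = x ^+ q + y ^+ q.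
Hypothesis frobK : forall x : F, x ^+ q ^+ q = x.
Hypothesis frob_nontrivial : exists a : F, a ^+ q != a.
Hypothesis norm_onto : forall t : F, t ^+ (q - 1) = 1 -> exists c : F, c ^+ q * c = t.

Let q_gt0 : (0 < q)%N := ltnW q_gt1.

Lemma frob0 : (0 : F) ^+ q = 0. Proof. by rewrite expr0n gtn_eqF. Qed.

Lemma frob_eq0 (x : F) : (x ^+ q == 0) = (x == 0).
Proof. by rewrite expf_eq0 q_gt0. Qed.

Lemma frobN (x : F) : (- x) ^+ q = - x ^+ q.
Proof. by apply/eqP; rewrite -addr_eq0 -frobD addNr frob0. Qed.

Lemma frob_sum I (r : seq I) (P : pred I) (f : I -> F) :
  (\sum_(i <- r | P i) f i) ^+ q = \sum_(i <- r | P i) f i ^+ q.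
Proof. exact: (big_morph _ frobD frob0). Qed.

Lemma sesqDl u v w : s (u + v) w = s u w + s v w.
Proof. by case: s_sesq => lin _ _; rewrite -{1}[u]scale1r lin mul1r. Qed.

Lemma sesq0l w : s 0 w = 0.
Proof.
by case: s_sesq => lin _ _; have := lin (-1) w w w; rewrite scaleN1r addNr mulN1r addNr.
Qed.

Lemma sesqZl c u w : s (c *: u) w = c * s u w.
Proof. by case: s_sesq => lin _ _; rewrite -[c *: u]addr0 lin sesq0l addr0. Qed.

Lemma sesqNl u w : s (- u) w = - s u w.
Proof. by rewrite -scaleN1r sesqZl mulN1r. Qed.

Lemma sesqBl u v w : s (u - v) w = s u w - s v w.
Proof. by rewrite sesqDl sesqNl. Qed.

Lemma sesq_suml I (r : seq I) (P : pred I) (f : I -> L) w :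
  s (\sum_(i <- r | P i) f i) w = \sum_(i <- r | P i) s (f i) w.
Proof. exact: (big_morph (s^~ w) (fun u v => sesqDl u v w) (sesq0l w)). Qed.

Lemma sesqDr u v w : s u (v + w) = s u v + s u w.
Proof. by case: s_sesq. Qed.

Lemma sesqZr c u v : s u (c *: v) = c ^+ q * s u v.
Proof. by case: s_sesq. Qed.

Lemma sesq0r u : s u 0 = 0.
Proof. by rewrite -(scale0r 0) sesqZr frob0 mul0r. Qed.

Lemma sesqNr u w : s u (- w) = - s u w.
Proof. by rewrite -scaleN1r sesqZr frobN expr1n mulN1r. Qed.

Lemma sesqBr u v w : s u (v - w) = s u v - s u w.
Proof. by rewrite sesqDr sesqNr. Qed.

Lemma sesq_sumr I (r : seq I) (P : pred I) (f : I -> L) u :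
  s u (\sum_(i <- r | P i) f i) = \sum_(i <- r | P i) s u (f i).
Proof. exact: (big_morph (s u) (sesqDr u) (sesq0r u)). Qed.

Lemma sesq_span0l X u v : {in X, forall x, s x u = 0} -> v \in <<X>>%VS -> s v u = 0.
Proof.
move=> X0; apply: (@span_ind _ _ (fun v => s v u = 0)) => // [|a x w x0 w0].
  exact: sesq0l.
by rewrite sesqDl sesqZl x0 w0 mulr0 addr0.
Qed.

Lemma sesq_span0r X u v : {in X, forall x, s u x = 0} -> v \in <<X>>%VS -> s u v = 0.
Proof.
move=> X0; apply: (@span_ind _ _ (fun v => s u v = 0)) => // [|a x w x0 w0].
  exact: sesq0r.
by rewrite sesqDr sesqZr x0 w0 mulr0 addr0.
Qed.

Definition srad2 u := srad s u /\ srad (sstar q s) u.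

Lemma srad2l y v : srad2 y -> s y v = 0.
Proof. by case=> /(_ v). Qed.

Lemma srad2r y v : srad2 y -> s v y = 0.
Proof. by case=> _ /(_ v) /eqP; rewrite frob_eq0 => /eqP. Qed.

Lemma srad2_span X v : {in X, forall x, srad2 x} -> v \in <<X>>%VS -> srad2 v.
Proof.
move=> Xrad vX; split=> y; first by apply: sesq_span0l vX => x /Xrad /srad2l.
by rewrite /sstar (sesq_span0r _ vX) ?frob0 // => x /Xrad /srad2r.
Qed.

Lemma sesq_srad2B a b r r' : srad2 r -> srad2 r' -> s (a - r) (b - r') = s a b.
Proof. by move=> rr rr'; rewrite sesqBl !sesqBr !(srad2l _ rr) !(srad2r _ rr') !subr0. Qed.

(* [sstar q s u = l * s u] pointwise; the rows of a matrix conjugating [C^* C^-1] to a diagonal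
   matrix are such vectors, written in the coordinates of [C]. *)
Definition eigvec (l : F) u := forall y, s y u ^+ q = l * s u y.

Lemma eigvec_span l X v : {in X, forall u, eigvec l u} -> v \in <<X>>%VS -> eigvec l v.
Proof.
move=> Xl; apply: (@span_ind _ _ (eigvec l)) => // [y|a u w ul wl y].
  by rewrite sesq0r sesq0l frob0 mulr0.
by rewrite sesqDr sesqZr frobD exprMn frobK ul wl sesqDl sesqZl mulrDr mulrCA.
Qed.

Lemma eigvec_sesq0 l u v : eigvec l u -> s u v = 0 -> s v u = 0.
Proof. by move=> ul uv0; apply/eqP; rewrite -frob_eq0 ul uv0 mulr0. Qed.

(* [s u v = m ^+ q * l * s u v], and [m ^+ q * l != 1] since [m ^+ q] is the inverse of [m]. *)
Lemma eigvec_orth l m u v :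
  m ^+ q * m = 1 -> l != m -> eigvec l u -> eigvec m v -> s u v = 0.
Proof.
move=> m_unit lm ul vm.
have e : s u v = m ^+ q * l * s u v by rewrite -{1}(frobK (s u v)) vm exprMn ul mulrA.
have /eqP : (1 - m ^+ q * l) * s u v = 0 by rewrite mulrBl mul1r -e subrr.
rewrite mulf_eq0 subr_eq0 => /orP[/eqP ml|/eqP //]; case/eqP: lm.
by rewrite -[RHS]mulr1 ml mulrA [m * _]mulrC m_unit mul1r.
Qed.

Lemma eigvec_anisotropic l w : eigvec l w -> s w w != 0 -> s w w ^+ (q - 1) = l.
Proof. by move=> wl ww; apply: (mulIf ww); rewrite -exprSr subn1 prednK // wl. Qed.

Lemma norm_exp_pred (d : F) : d != 0 -> (d ^+ (q - 1)) ^+ q * d ^+ (q - 1) = 1.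
Proof.
move=> d0; apply: (mulfI d0); rewrite mulr1 -exprM -exprD -exprS.
by rewrite (_ : _.+1 = q * q)%N ?exprM ?frobK //; nia.
Qed.

Definition orth x y := (s x y == 0) && (s y x == 0).

Definition orthogonal xs := pairwise orth xs.

Definition sesq_diag xs := [seq s x x | x <- xs].

Lemma orth_sym : symmetric orth. Proof. by move=> x y; rewrite /orth andbC. Qed.

Lemma orthogonal_nth xs i j : orthogonal xs ->
  (i < size xs)%N -> (j < size xs)%N -> i != j -> s xs`_i xs`_j = 0.
Proof.
move=> /(pairwiseP 0) oxs ilt jlt; case: ltngtP => // ij _.
  by have /andP[/eqP] := oxs i j ilt jlt ij.
by have /andP[_ /eqP] := oxs j i jlt ilt ij.
Qed.

Lemma orthogonal_mem xs x y : orthogonal xs -> uniq xs ->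
  x \in xs -> y \in xs -> x != y -> s x y = 0.
Proof.
move=> oxs uxs xxs yxs; rewrite -(nth_index 0 xxs) -(nth_index 0 yxs) => xy.
by rewrite orthogonal_nth ?index_mem //; apply: contraNneq xy => ->.
Qed.

Lemma orthogonal_suml xs (k : 'I_(size xs) -> F) (j : 'I_(size xs)) : orthogonal xs ->
  s (\sum_(i < size xs) k i *: xs`_i) xs`_j = k j * s xs`_j xs`_j.
Proof.
move=> oxs; rewrite sesq_suml (bigD1 j) //= sesqZl big1 ?addr0 // => i ij.
by rewrite sesqZl orthogonal_nth ?mulr0.
Qed.

Lemma orthogonal_sumr xs (k : 'I_(size xs) -> F) (j : 'I_(size xs)) : orthogonal xs ->
  s xs`_j (\sum_(i < size xs) k i *: xs`_i) = k j ^+ q * s xs`_j xs`_j.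
Proof.
move=> oxs; rewrite sesq_sumr (bigD1 j) //= sesqZr big1 ?addr0 // => i ij.
by rewrite sesqZr orthogonal_nth 1?eq_sym ?mulr0.
Qed.

Lemma free_orthogonal xs : orthogonal xs -> all (fun x => s x x != 0) xs -> free xs.
Proof.
move=> oxs /allP xs_aniso; rewrite -[xs]/(tval (in_tuple xs)); apply/freeP => k k0 i.
have := orthogonal_suml k i oxs; rewrite k0 sesq0l => /esym/eqP.
by rewrite mulf_eq0 (negbTE (xs_aniso _ (mem_nth 0 (ltn_ord i)))) orbF => /eqP.
Qed.

Lemma orthogonal_flatten (ls : seq F) (xs : F -> seq L) :
  uniq ls -> {in ls, forall l, l ^+ q * l = 1} ->
  {in ls, forall l, orthogonal (xs l) /\ {in xs l, forall x, eigvec l x}} ->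
  orthogonal (flatten [seq xs l | l <- ls]).
Proof.
elim: ls => //= l ls IH /andP[lls uls] ls_unit ls_ok.
have [oxl xl_eig] := ls_ok l (mem_head _ _).
have oxls : orthogonal (flatten [seq xs m | m <- ls]).
  by apply: IH => // m mls; [apply: ls_unit | apply: ls_ok]; rewrite inE mls orbT.
rewrite /orthogonal pairwise_cat; apply/and3P; split => //.
apply/allrelP => x y xl /flatten_mapP[m mls ym].
have [_ ym_eig] : orthogonal (xs m) /\ {in xs m, forall y, eigvec m y}.
  by apply: ls_ok; rewrite inE mls orbT.
have lm : l != m by apply: contraNneq lls => ->.
rewrite /orth (eigvec_orth _ lm (xl_eig x xl) (ym_eig y ym)) ?ls_unit ?inE ?mls ?orbT //.
rewrite eq_sym in lm.
by rewrite (eigvec_orth _ lm (ym_eig y ym) (xl_eig x xl)) ?eqxx ?ls_unit ?mem_head.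
Qed.

Lemma sesq_polar a v w : a ^+ q != a -> s v v = 0 -> s w w = 0 ->
  s (v + w) (v + w) = 0 -> s (v + a *: w) (v + a *: w) = 0 -> s v w = 0.
Proof.
move=> aq vv ww; rewrite !sesqDl !sesqDr !sesqZl !sesqZr vv ww !mulr0 !addr0 !add0r.
move/eqP; rewrite addr_eq0 => /eqP-> /eqP; rewrite mulrN addrC -mulrBl mulf_eq0 subr_eq0.
by rewrite eq_sym (negbTE aq) => /eqP->; rewrite oppr0.
Qed.

Definition nondeg_on (V : {vspace L}) :=
  forall v, v \in V -> {in V, forall y, s v y = 0} -> v = 0.

(* Polarization: if every candidate [x], [x + y], [x + a y] built from a basis were
   isotropic, the form would vanish on [V]. *)
Lemma exists_anisotropic (V : {vspace L}) : V != 0%VS -> nondeg_on V ->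
  exists2 w, w \in V & s w w != 0.
Proof.
move=> V0 ndV; have [a aq] := frob_nontrivial; set e := vbasis V.
set cands := e ++ [seq x + y | x <- e, y <- e] ++ [seq x + a *: y | x <- e, y <- e].
have eV x : x \in e -> x \in V := @vbasis_mem _ _ _ _.
have [/hasP[w wc ww]|/hasPn iso] := boolP (has (fun x => s x x != 0) cands).
  exists w => //; move: wc; rewrite !mem_cat => /or3P[/eV //|/allpairsP|/allpairsP].
    by case=> -[x y] /= [/eV xV /eV yV ->]; rewrite memvD.
  by case=> -[x y] /= [/eV xV /eV yV ->]; rewrite memvD ?memvZ.
have iso' x : x \in cands -> s x x = 0 by move/iso/negbNE/eqP.
have e0 x y : x \in e -> y \in e -> s x y = 0.
  move=> xe ye; apply: (sesq_polar aq); apply: iso'; rewrite !mem_cat ?xe ?ye //.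
  - by rewrite (allpairs_f (fun x y => x + y) xe ye) orbT.
  - by rewrite (allpairs_f (fun x y => x + a *: y) xe ye) !orbT.
have /eqP[] : vpick V != 0 by rewrite vpick0.
apply: ndV (memv_pick V) _ => y; rewrite -(span_basis (vbasisP V)) => yV.
apply: sesq_span0r yV => x xe; apply: (@sesq_span0l e) => [z ze|]; first exact: e0.
by rewrite (span_basis (vbasisP V)) memv_pick.
Qed.

Lemma orthogonal_complement (V : {vspace L}) x : x \in V -> s x x != 0 ->
  exists V' : {vspace L},
    [/\ (V' <= V)%VS, {in V', forall v, s v x = 0} & (V <= V' + <[x]>)%VS].
Proof.
move=> xV xx; pose p v := v - (s v x / s x x) *: x.
have px v : s (p v) x = 0 by rewrite sesqBl sesqZl divfK ?subrr.
exists <<map p (vbasis V)>>%VS; split.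
- by apply/span_subvP => _ /mapP[v /vbasis_mem vV ->]; rewrite memvB ?memvZ.
- by move=> v; apply: sesq_span0l => _ /mapP[w _ ->].
rewrite -{1}(span_basis (vbasisP V)); apply/span_subvP => v ve.
rewrite -(subrK ((s v x / s x x) *: x) v); apply: memv_add; last exact/memvZ/memv_line.
exact/memv_span/(map_f p).
Qed.

Lemma eigenspace_orthogonal_seq l (V : {vspace L}) ds :
  {in V, forall v, eigvec l v} -> nondeg_on V ->
  all (fun d => (d != 0) && (d ^+ (q - 1) == l)) ds -> (size ds <= \dim V)%N ->
  exists xs, [/\ orthogonal xs, sesq_diag xs = ds & {subset xs <= V}].
Proof.
elim: ds V => [|d ds IH] V Vl ndV; first by exists [::].
case/andP=> /andP[d0 /eqP dl] ds_ok dimV.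
have [w wV ww] : exists2 w, w \in V & s w w != 0.
  by apply: exists_anisotropic ndV; rewrite -dimv_eq0 -lt0n (leq_trans _ dimV).
have [c cN] : exists c, c ^+ q * c = d / s w w.
  apply: norm_onto; rewrite expr_div_n dl (eigvec_anisotropic (Vl w wV) ww) divff //.
  by rewrite -dl expf_neq0.
pose x := c *: w; have xV : x \in V by rewrite memvZ.
have xx : s x x = d by rewrite sesqZl sesqZr mulrA [c * _]mulrC cN divfK.
have xx0 : s x x != 0 by rewrite xx.
have [V' [V'V V'x VV'x]] := orthogonal_complement xV xx0.
have V'l v : v \in V' -> eigvec l v by move=> /(subvP V'V); apply: Vl.
have ndV' : nondeg_on V'.
  move=> v vV' v0; apply: ndV (subvP V'V _ vV') _ => z /(subvP VV'x).
  case/memv_addP=> y yV' [_ /vlineP[a ->] ->].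
  by rewrite sesqDr sesqZr v0 // V'x // mulr0 addr0.
have dimV' : (size ds <= \dim V')%N.
  have := leq_trans (dimvS VV'x) (dimv_add_leqif V' <[x]>).1.
  by rewrite dim_vline; move: dimV => /=; case: (x != 0) => /=; lia.
have [xs [oxs dxs xsV']] := IH V' V'l ndV' ds_ok dimV'.
exists (x :: xs); split; last by move=> y; rewrite inE => /predU1P[->|/xsV' /(subvP V'V)].
  apply/andP; split => //; apply/allP => y /xsV' yV'.
  by rewrite /orth V'x // (eigvec_sesq0 (V'l y yV') (V'x y yV')) eqxx.
by rewrite /= xx dxs.
Qed.

Lemma coefmx_diag_filter N (X : N.-tuple L) :
  [seq coefmx s X i i | i <- enum 'I_N & coefmx s X i i != 0] =
  sesq_diag [seq x <- X | s x x != 0].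
Proof.
rewrite (eq_filter (a2 := preim (tnth X) (fun x => s x x != 0))); last first.
  by move=> i; rewrite /= mxE.
rewrite (eq_map (g := (fun x => s x x) \o tnth X)); last by move=> i; rewrite /= mxE.
by rewrite map_comp -filter_map map_tnth_enum.
Qed.

Lemma has_diag_coefmxE d : has_diag_coefmx s d <->
  exists2 X, basis_of fullv X /\ orthogonal X & perm_eq (sesq_diag [seq x <- X | s x x != 0]) d.
Proof.
split=> [[X [XB Xoff Xd]]|[X [XB oX] Xd]].
  exists X; last by rewrite -coefmx_diag_filter.
  split=> //; apply/(pairwiseP 0) => i j; rewrite !inE size_tuple => ilt jlt ij.
  have := Xoff (Ordinal ilt) (Ordinal jlt); have := Xoff (Ordinal jlt) (Ordinal ilt).
  rewrite !mxE !(tnth_nth 0) /orth /= => eji eij.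
  by rewrite eij ?eji ?eqxx // -val_eqE /= ?(gtn_eqF ij) ?(ltn_eqF ij).
have sizeX : size X == \dim (fullv : {vspace L}) by rewrite (size_basis (X := in_tuple X)).
exists (Tuple sizeX); split => //; last by rewrite coefmx_diag_filter.
move=> i j ij; rewrite mxE !(tnth_nth 0) orthogonal_nth // ?(eqP sizeX) //.
Qed.

Lemma srad_eq_of_orthogonal_basis X u : basis_of fullv X -> orthogonal X ->
  srad s u <-> srad (sstar q s) u.
Proof.
move=> XB oX; have XB' : basis_of fullv (in_tuple X) by [].
have uE := coord_basis XB' (memvf u).
have vX v : v \in <<X>>%VS by rewrite (span_basis XB) memvf.
have sym (j : 'I_(size X)) : (s u X`_j == 0) = (s X`_j u == 0).
  by rewrite {1}uE {2}uE orthogonal_suml // orthogonal_sumr // !mulf_eq0 frob_eq0.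
split=> u0 v.
  rewrite /sstar (sesq_span0l _ (vX v)) ?frob0 // => _ /(nthP 0)[j jlt <-].
  by apply/eqP; rewrite -(sym (Ordinal jlt)) u0.
apply: (sesq_span0r _ (vX v)) => _ /(nthP 0)[j jlt <-].
by apply/eqP; rewrite (sym (Ordinal jlt)) -frob_eq0; apply/eqP/u0.
Qed.

Lemma srad2_of_isotropic X y : basis_of fullv X -> orthogonal X ->
  y \in X -> s y y = 0 -> srad2 y.
Proof.
move=> XB oX yX yy; have uX := free_uniq (basis_free XB).
have vX v : v \in <<X>>%VS by rewrite (span_basis XB) memvf.
have yx x : x \in X -> s y x = 0 /\ s x y = 0.
  by move=> xX; have [->|xy] := eqVneq x y; last rewrite !(orthogonal_mem oX) // eq_sym.
split=> v; first by apply: (sesq_span0r _ (vX v)) => x /yx[].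
by rewrite /sstar (sesq_span0l _ (vX v)) ?frob0 // => x /yx[].
Qed.

Section ReducedDomain.
Variable W : {vspace L}.
Hypothesis W_red : reduced_domain q s W.

Lemma reduced_decomp x : exists2 w, w \in W & srad2 (x - w).
Proof.
by case: W_red => dec _; have [w [r [wW r1 r2 ->]]] := dec x; exists w; rewrite // addrC addKr.
Qed.

Lemma W_srad2_eq0 w : w \in W -> srad2 w -> w = 0.
Proof. by case: W_red => _ W0 wW []; apply: W0. Qed.

Lemma srad_of_W u : {in W, forall w, s u w = 0} -> srad s u.
Proof.
move=> uW y; have [w wW ry] := reduced_decomp y.
by rewrite -(subrK w y) sesqDr (srad2r _ ry) uW ?add0r.
Qed.

Lemma radical_complement :
  exists2 R : {vspace L}, {in R, forall v, srad2 v} & (W + R)%VS = fullv.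
Proof.
have decomp_seq (xs : seq L) : exists2 rs : seq L,
    {in rs, forall r, srad2 r} & {subset xs <= (W + <<rs>>)%VS}.
  elim: xs => [|x xs [rs rs_rad xs_sub]]; first by exists [::].
  have [w wW rx] := reduced_decomp x.
  exists (x - w :: rs) => [r /predU1P[->|/rs_rad]//|y /predU1P[->|/xs_sub]].
    rewrite -{1}(subrK w x) addrC; apply: memv_add => //; exact/memv_span/mem_head.
  by apply: subvP; apply: addvS => //; apply: sub_span => r rrs; rewrite inE rrs orbT.
have [rs rs_rad e_sub] := decomp_seq (vbasis fullv).
exists <<rs>>%VS; first by move=> v; apply: srad2_span.
apply/eqP; rewrite eqEsubv subvf /= -(span_basis (vbasisP fullv)); exact/span_subvP.
Qed.

Lemma capv_radical (R : {vspace L}) : {in R, forall v, srad2 v} -> (W :&: R = 0)%VS.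
Proof.
move=> Rrad; apply/eqP; rewrite -subv0; apply/subvP => v /memv_capP[vW vR].
by rewrite memv0 (W_srad2_eq0 vW (Rrad v vR)).
Qed.

Lemma has_diag_coefmx_of_orthogonal xs d : basis_of W xs -> orthogonal xs ->
  all (fun x => s x x != 0) xs -> perm_eq (sesq_diag xs) d -> has_diag_coefmx s d.
Proof.
move=> xsW oxs xs_aniso xsd; have [R Rrad WR] := radical_complement.
have WR0 := capv_radical Rrad; set V := tval (vbasis R).
have Rorth x y : y \in V -> orth x y /\ orth y x.
  by move=> /vbasis_mem /Rrad yR; rewrite /orth (srad2r _ yR) (srad2l _ yR) eqxx.
apply/has_diag_coefmxE; exists (xs ++ V); last first.
  rewrite filter_cat (all_filterP xs_aniso) (eq_in_filter (a2 := pred0)) ?filter_pred0 ?cats0 //.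
  by move=> x /vbasis_mem /Rrad xR; rewrite (srad2l _ xR) eqxx.
split.
  rewrite basisEfree cat_free (basis_free xsW) (basis_free (vbasisP R)) subvf /=.
  rewrite (span_basis xsW) (span_basis (vbasisP R)); apply/andP; split; first exact/directv_addP.
  by rewrite size_cat size_tuple -WR (dimv_disjoint_sum WR0) (size_basis (X := in_tuple xs)).
rewrite /orthogonal pairwise_cat; apply/and3P; split => //.
  by apply/allrelP => x y _ /(Rorth x)[].
by apply/(pairwiseP 0) => i j _ jlt _; have [] := Rorth V`_i _ (mem_nth 0 jlt).
Qed.

Lemma size_anisotropic_ge b X : basis_of W b -> basis_of fullv X -> orthogonal X ->
  (size b <= size [seq x <- X | s x x != 0%R])%N.
Proof.
move=> bW XB oX; set Y := [seq x <- X | predC (fun x => s x x != 0) x].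
have Yrad y : y \in Y -> srad2 y.
  by rewrite mem_filter /= negbK => /andP[/eqP yy yX]; apply: srad2_of_isotropic XB oX yX yy.
have free_bY : free (b ++ Y).
  rewrite cat_free (basis_free bW) filter_free ?(basis_free XB) //= (span_basis bW).
  by apply/directv_addP/capv_radical => v; apply: srad2_span.
have := dimvS (subvf <<b ++ Y>>%VS); rewrite (eqnP free_bY) size_cat.
rewrite (size_basis (X := in_tuple X) XB) -(count_predC (fun x => s x x != 0) X).
by rewrite -!size_filter leq_add2r.
Qed.

Lemma sesq_projection_onto_W :
  exists pi : L -> L, (forall x, pi x \in W) /\ (forall x y, s (pi x) (pi y) = s x y).
Proof.
have [R Rrad WR] := radical_complement; have WR0 := capv_radical Rrad.
exists (daddv_pi W R); split=> [x|x y]; first exact: memv_pi.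
have pi_rad z : srad2 (z - daddv_pi W R z).
  apply: Rrad; rewrite -{1}(daddv_pi_add WR0 (_ : z \in (W + R)%VS)) ?WR ?memvf //.
  by rewrite addrC addKr memv_pi.
by rewrite -(sesq_srad2B x y (pi_rad x) (pi_rad y)) !opprB ![_ + (_ - _)]addrC !subrK.
Qed.

Lemma orthogonal_in_W_of_has_diag b d : basis_of W b -> has_diag_coefmx s d ->
  exists ws, [/\ orthogonal ws, {subset ws <= W}, all (fun x => s x x != 0) ws,
                 sesq_diag ws = d & size d = size b].
Proof.
move=> bW /has_diag_coefmxE[X [XB oX] Xd]; set Z := [seq x <- X | s x x != 0].
have [pi [piW pi_sesq]] := sesq_projection_onto_W.
set ws0 := [seq pi x | x <- Z].
have ows0 : orthogonal ws0.
  rewrite /orthogonal pairwise_map; apply: sub_pairwise (pairwise_filter _ oX) => x y.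
  by rewrite /= /orth !pi_sesq.
have ws0_aniso : all (fun x => s x x != 0) ws0.
  by rewrite all_map; apply/allP => x; rewrite mem_filter /= pi_sesq => /andP[].
have ws0d : perm_eq (sesq_diag ws0) d.
  by rewrite /sesq_diag -map_comp (eq_map (g := fun x => s x x)) // => x /=; rewrite pi_sesq.
have [ws ws0ws wsd] := perm_map_lift 0 ws0d.
have wsW : {subset ws <= W} by move=> x; rewrite -(perm_mem ws0ws) => /mapP[y _ ->].
exists ws; split => //; first exact: pairwise_perm orth_sym ws0ws ows0.
  by rewrite -(perm_all _ ws0ws).
apply/eqP; rewrite eqn_leq -(perm_size Xd) size_map size_anisotropic_ge // andbT.
have /eqnP dim_ws0 := free_orthogonal ows0 ws0_aniso.
rewrite -(size_map pi) -/ws0 -dim_ws0 -(size_basis (X := in_tuple b) bW).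
by apply/dimvS/span_subvP => _ /mapP[y _ ->].
Qed.

Section CoefMatrix.
Variables (k : nat) (b : k.-tuple L).
Hypothesis bW : basis_of W b.

Local Notation C := (coefmx s b).

Definition row_comb r (A : 'M[F]_(r, k)) i := \sum_l A i l *: b`_l.

Lemma row_comb_in r (A : 'M[F]_(r, k)) i : row_comb A i \in W.
Proof.
apply: memv_suml => l _; rewrite memvZ // -(span_basis bW) memv_span //.
by rewrite mem_nth ?size_tuple.
Qed.

Lemma row_comb_mul r (A : 'M[F]_(r, k)) (B : 'M[F]_k) i :
  row_comb (A *m B) i = \sum_j A i j *: row_comb B j.
Proof.
rewrite /row_comb; under eq_bigr => l _ do rewrite mxE scaler_suml.
rewrite exchange_big; apply: eq_bigr => j _; rewrite scaler_sumr.
by apply: eq_bigr => l _; rewrite scalerA.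
Qed.

Lemma row_comb1 i : row_comb 1%:M i = b`_i.
Proof.
rewrite /row_comb (bigD1 i) //= big1 => [|l li]; first by rewrite mxE eqxx scale1r addr0.
by rewrite mxE eq_sym (negbTE li) scale0r.
Qed.

Lemma coefmxE i j : C i j = s b`_i b`_j.
Proof. by rewrite mxE !(tnth_nth 0). Qed.

Lemma mulmx_coefmxE r (A : 'M[F]_(r, k)) i j : (A *m C) i j = s (row_comb A i) b`_j.
Proof. by rewrite mxE sesq_suml; apply: eq_bigr => l _; rewrite sesqZl coefmxE. Qed.

Lemma mulmx_coefmx_starE (A : 'M[F]_k) i j :
  (A *m mx_star q C) i j = s b`_j (row_comb A i) ^+ q.
Proof.
rewrite mxE sesq_sumr frob_sum; apply: eq_bigr => l _.
by rewrite sesqZr exprMn frobK !mxE !(tnth_nth 0).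
Qed.

Lemma gram_coefmxE (A B : 'M[F]_k) i j :
  (A *m C *m mx_star q B) i j = s (row_comb A i) (row_comb B j).
Proof.
rewrite mxE sesq_sumr; apply: eq_bigr => l _.
by rewrite mulmx_coefmxE sesqZr !mxE mulrC.
Qed.

Lemma gram_coefmx_starE (A B : 'M[F]_k) i j :
  (A *m mx_star q C *m mx_star q B) i j = s (row_comb B j) (row_comb A i) ^+ q.
Proof.
rewrite mxE sesq_suml frob_sum; apply: eq_bigr => l _.
by rewrite mulmx_coefmx_starE sesqZl exprMn !mxE mulrC.
Qed.

Lemma mx_conj_of_orthogonal ws : size ws = k -> orthogonal ws -> {subset ws <= W} ->
  all (fun x => s x x != 0) ws ->
  mx_conj (mx_star q C *m invmx C) (diag_mx (\row_(i < k) (sesq_diag ws)`_i ^+ (q - 1))).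
Proof.
move=> wsk ows wsW /allP ws_aniso; set d := sesq_diag ws.
have ik (i : 'I_k) : (i < size ws)%N by rewrite wsk.
pose A : 'M[F]_k := \matrix_(i, l) coord b l ws`_i.
have rowA i : row_comb A i = ws`_i.
  rewrite [RHS](coord_basis bW (wsW _ (mem_nth 0 (ik i)))).
  by apply: eq_bigr => l _; rewrite mxE.
have gram (i j : 'I_k) : s ws`_i ws`_j = d`_i *+ (i == j).
  have [->|ij] := eqVneq i j; first by rewrite (nth_map 0) ?ik.
  by rewrite orthogonal_nth ?ik ?mulr0n.
have ACA : A *m C *m mx_star q A = diag_mx (\row_i d`_i).
  by apply/matrixP => i j; rewrite gram_coefmxE !rowA gram !mxE.
have ACsA : A *m mx_star q C *m mx_star q A = diag_mx (\row_i d`_i ^+ q).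
  apply/matrixP => i j; rewrite gram_coefmx_starE !rowA gram !mxE eq_sym.
  by have [->|] := eqVneq i j; rewrite ?mulr0n ?frob0.
have D_unit : (diag_mx (\row_i d`_i) : 'M[F]_k) \in unitmx.
  rewrite unitmxE det_diag unitfE; apply/prodf_neq0 => i _.
  by rewrite mxE (nth_map 0) ?ik // ws_aniso ?mem_nth ?ik.
have := D_unit; rewrite -ACA !unitmx_mul => /andP[/andP[A_unit C_unit] As_unit].
have diag_pow : diag_mx (\row_i d`_i ^+ (q - 1)) *m diag_mx (\row_i d`_i) =
    diag_mx (\row_i d`_i ^+ q) :> 'M[F]_k.
  by apply/matrixP => i j; rewrite mul_diag_mx !mxE mulrnAr -exprSr subn1 prednK.
have Cs : mx_star q C = invmx A *m diag_mx (\row_i d`_i ^+ q) *m invmx (mx_star q A).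
  by rewrite -ACsA !mulmxA mulVmx // mul1mx mulmxK.
exists (invmx A), A; split; [exact: mulVmx | exact: mulmxV |].
apply: (can_inj (mulmxK C_unit)); rewrite mulmxKV // Cs -diag_pow -ACA.
by rewrite !mulmxA mulmxK.
Qed.

Section SymmetricRadical.
Hypothesis srad_sym : forall u, srad s u <-> srad (sstar q s) u.

Lemma W_srad_eq0 w : w \in W -> srad s w -> w = 0.
Proof. by move=> wW wrad; apply: W_srad2_eq0 => //; split; last apply/srad_sym. Qed.

Section Eigenbasis.
Variable ps : seq (L * F).
Hypotheses (psW : basis_of W (unzip1 ps)) (ps_nz : all (fun p => p.2 != 0) ps).
Hypothesis ps_eig : {in ps, forall p, eigvec (p.2 ^+ (q - 1)) p.1}.

Let lam (p : L * F) := p.2 ^+ (q - 1).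
Let fiber l := [seq p <- ps | lam p == l].
Let E l := <<[seq p.1 | p <- fiber l]>>%VS.

Let lam_unit p : p \in ps -> lam p ^+ q * lam p = 1.
Proof. by move/(allP ps_nz)/norm_exp_pred. Qed.

Let E_sub l : (E l <= W)%VS.
Proof.
apply/span_subvP => x /mapP[p]; rewrite mem_filter => /andP[_ pps] ->.
by rewrite -(span_basis psW) memv_span ?map_f.
Qed.

Let E_eig l : {in E l, forall v, eigvec l v}.
Proof.
move=> v; apply: eigvec_span => x /mapP[p]; rewrite mem_filter => /andP[/eqP <- pps] ->.
exact: ps_eig.
Qed.

(* Distinct eigenspaces are orthogonal, so a vector of [E l] orthogonal to [E l] is
   orthogonal to [W]. *)
Let E_nondeg l : nondeg_on (E l).
Proof.
move=> v vE v0; apply: W_srad_eq0 (subvP (E_sub l) _ vE) _; apply: srad_of_W => w.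
rewrite -(span_basis psW); apply: sesq_span0r => _ /mapP[p pps ->].
have [pl|pl] := eqVneq (lam p) l.
  by apply: v0; apply: memv_span; rewrite map_f // mem_filter pl eqxx.
by apply: eigvec_orth (lam_unit pps) _ (E_eig vE) (ps_eig pps); rewrite eq_sym.
Qed.

Let dim_E l : (size [seq p.2 | p <- fiber l] <= \dim (E l))%N.
Proof.
suff /eqnP-> : free [seq p.1 | p <- fiber l] by rewrite !size_map.
apply: (@catl_free _ _ [seq p.1 | p <- ps & predC (fun p => lam p == l) p]).
have /(perm_map fst) ps_split : perm_eq (fiber l ++
    [seq p <- ps | predC (fun p => lam p == l) p]) ps by rewrite perm_filterC.
by rewrite -map_cat (perm_free ps_split) (basis_free psW).
Qed.

Let fiber_values l : all (fun d => (d != 0) && (d ^+ (q - 1) == l)) [seq p.2 | p <- fiber l].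
Proof.
apply/allP => x /mapP[p]; rewrite mem_filter => /andP[pl pps] ->.
by rewrite (allP ps_nz _ pps).
Qed.

Lemma orthogonal_basis_of_eigenbasis :
  exists xs, [/\ orthogonal xs, {subset xs <= W} & perm_eq (sesq_diag xs) (unzip2 ps)].
Proof.
have [xs xs_ok] := fin_all_exists (fun l =>
  eigenspace_orthogonal_seq (@E_eig l) (@E_nondeg l) (@fiber_values l) (@dim_E l)).
set ls := undup (map lam ps); exists (flatten [seq xs l | l <- ls]); split.
- apply: orthogonal_flatten (undup_uniq _) _ _ => l; rewrite mem_undup => /mapP[p pps ->].
    exact: lam_unit.
  by have [oxs _ xsE] := xs_ok (lam p); split => // x /xsE /E_eig.
- by move=> x /flatten_mapP[l _ xl]; have [_ _ /(_ x xl) /(subvP (E_sub l))] := xs_ok l.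
rewrite /sesq_diag map_flatten -map_comp (eq_map (g := fun l => [seq p.2 | p <- fiber l])).
  by have := perm_map snd (perm_flatten_fibers lam ps); rewrite map_flatten -map_comp.
by move=> l /=; have [_ <- _] := xs_ok l.
Qed.

End Eigenbasis.

Lemma coefmx_unit : C \in unitmx.
Proof.
rewrite unitmxE unitfE; apply/negP => /det0P[v v0 vC]; case/eqP: v0; apply/rowP => l.
rewrite mxE.
suff v_comb0 : row_comb v 0 = 0 by move/freeP: (basis_free bW) => /(_ (v 0) v_comb0).
apply: W_srad_eq0; first exact: row_comb_in.
apply: srad_of_W => w; rewrite -(span_basis bW); apply: sesq_span0r => x /(nthP 0)[m].
by rewrite size_tuple => mk <-; rewrite -(mulmx_coefmxE v 0 (Ordinal mk)) vC mxE.
Qed.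

Lemma eigvec_of_basis l u :
  (forall m : 'I_k, s b`_m u ^+ q = l * s u b`_m) -> eigvec l u.
Proof.
move=> ub y; have [w wW ry] := reduced_decomp y.
rewrite -(subrK w y) sesqDl sesqDr (srad2l _ ry) (srad2r _ ry) !add0r.
move: wW; rewrite -(span_basis bW).
apply: (@span_ind _ _ (fun w => s w u ^+ q = l * s u w)) => [|a x z xu zu|].
- by rewrite sesq0l sesq0r frob0 mulr0.
- by rewrite sesqDl sesqZl sesqDr sesqZr frobD exprMn xu zu mulrDr mulrCA.
by move=> x /(nthP 0)[m]; rewrite size_tuple => mk <-; exact: (ub (Ordinal mk)).
Qed.

Lemma row_comb_basis (P Q : 'M[F]_k) :
  P *m Q = 1%:M -> basis_of W [seq row_comb Q i | i <- enum 'I_k].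
Proof.
move=> PQ; rewrite basisEdim size_map size_enum_ord (size_basis bW) leqnn andbT.
rewrite -(span_basis bW); apply/span_subvP => x /(nthP 0)[l]; rewrite size_tuple => lk <-.
rewrite -[l]/(val (Ordinal lk)) -row_comb1 -PQ row_comb_mul.
by apply: memv_suml => i _; apply/memvZ/memv_span/map_f; rewrite mem_enum.
Qed.

Lemma eigvec_rows_of_mx_conj (P Q : 'M[F]_k) (lam : 'I_k -> F) : Q *m P = 1%:M ->
  mx_star q C *m invmx C = P *m diag_mx (\row_i lam i) *m Q ->
  forall i, eigvec (lam i) (row_comb Q i).
Proof.
move=> QP CP i; apply: eigvec_of_basis => m.
have := congr1 (fun M => Q *m M *m C) CP; rewrite /= !mulmxA QP mul1mx mulmxKV ?coefmx_unit //.
move/matrixP/(_ i m); rewrite mulmx_coefmx_starE -mulmxA mul_diag_mx mxE mulmx_coefmxE.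
by rewrite mxE.
Qed.

Lemma has_diag_coefmx_of_mx_conj d (P Q : 'M[F]_k) : size d = k -> P *m Q = 1%:M -> Q *m P = 1%:M ->
  mx_star q C *m invmx C = P *m diag_mx (\row_(i < k) d`_i ^+ (q - 1)) *m Q ->
  has_diag_coefmx s d.
Proof.
move=> dk PQ QP CP; have Q_eig := eigvec_rows_of_mx_conj QP CP.
pose ps := [seq (row_comb Q i, d`_i) | i <- enum 'I_k].
have psW : basis_of W (unzip1 ps) by rewrite /unzip1 -map_comp; exact: row_comb_basis PQ.
have ps_d : unzip2 ps = d.
  by rewrite /unzip2 -map_comp (map_comp (nth 0 d) val) val_enum_ord -dk -/(mkseq _ _) mkseq_nth.
have ps_nz : all (fun p => p.2 != 0) ps.
  apply/allP => _ /mapP[i _ ->] /=; apply/eqP => di0.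
  have : row_comb Q i \in unzip1 ps by rewrite /unzip1 -map_comp map_f ?mem_enum.
  move/(free_not0 (basis_free psW))/eqP; apply.
  apply: W_srad_eq0 (row_comb_in Q i) _; apply/srad_sym => y.
  by rewrite /sstar Q_eig di0 expr0n gtn_eqF ?subn_gt0 // mul0r.
have [xs [oxs xsW xsd]] : exists xs,
    [/\ orthogonal xs, {subset xs <= W} & perm_eq (sesq_diag xs) (unzip2 ps)].
  by apply: orthogonal_basis_of_eigenbasis psW ps_nz _ => _ /mapP[i _ ->]; exact: Q_eig.
rewrite ps_d in xsd.
have xs_aniso : all (fun x => s x x != 0) xs.
  have : all (fun y => y != 0) d by rewrite -ps_d /unzip2 all_map.
  by rewrite -(perm_all _ xsd) all_map.
have xsB : basis_of W xs.
  rewrite basisEfree (free_orthogonal oxs xs_aniso) (size_basis bW) -dk -(perm_size xsd).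
  by rewrite size_map leqnn andbT; apply/span_subvP.
exact: has_diag_coefmx_of_orthogonal xsB oxs xs_aniso xsd.
Qed.

End SymmetricRadical.
End CoefMatrix.
End ReducedDomain.
End Sesquilinear.

Lemma mx_conj_size (K : fieldType) k r (A : 'M[K]_k) (B : 'M[K]_r) : mx_conj A B -> r = k.
Proof.
case=> P [Q [PQ QP _]]; apply/eqP; rewrite eqn_leq.
have := mxrankM_maxl Q P; rewrite QP mxrank1 => /leq_trans->; last exact: rank_leq_col.
by have := mxrankM_maxl P Q; rewrite PQ mxrank1 => /leq_trans->; last exact: rank_leq_col.
Qed.

Unset Implicit Arguments.

Theorem corollary2p7 (p e q n : nat) (F : finFieldType) (L : fieldExtType F)
    (s : L -> L -> F) (W : {vspace L}) (k : nat) (b : k.-tuple L) (d : seq F) :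
  prime p -> (0 < e)%N -> q = (p ^ e)%N -> #|F| = (q ^ 2)%N ->
  (0 < n)%N -> \dim (fullv : {vspace L}) = n ->
  sesquilinear q s ->
  reduced_domain q s W -> basis_of W b ->
  (has_diag_coefmx s d <->
     (forall u, srad s u <-> srad (sstar q s) u) /\
     mx_conj (mx_star q (coefmx s b) *m invmx (coefmx s b))
             (diag_mx (\row_(i < size d) (nth 0 d i) ^+ (q - 1)))).
Proof.
move=> p_prime e_gt0 q_def cardF _ _ s_sesq W_red bW.
have q_gt1 : (1 < q)%N by rewrite q_def -{1}(expn0 p) ltn_exp2l ?prime_gt1.
have frobD (x y : F) : (x + y) ^+ q = x ^+ q + y ^+ q.
  have pF : p \in [pchar F] by apply: (@card_finPcharP _ _ (e * 2)); rewrite // cardF q_def -expnM.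
  by apply: exprDn_pchar; rewrite q_def pnatX pnatE // pF.
have frobK := frobK cardF.
split=> [diag | [srad_sym conj]].
  have [X [XB oX] _] := (has_diag_coefmxE s d).1 diag.
  split=> [u|]; first exact: srad_eq_of_orthogonal_basis XB oX.
  have [ws [ows wsW ws_aniso <- dk]] :=
    orthogonal_in_W_of_has_diag s_sesq q_gt1 frobD W_red bW diag.
  rewrite size_tuple in dk; subst k.
  exact: (mx_conj_of_orthogonal s_sesq q_gt1 frobD frobK bW (esym (size_map _ _))
    ows wsW ws_aniso).
have dk := mx_conj_size conj; subst k; case: conj => P [Q [PQ QP CP]].
exact: (has_diag_coefmx_of_mx_conj s_sesq q_gt1 frobD frobK (frob_not_id q_gt1 cardF)
  (norm_surjective q_gt1 cardF) W_red bW srad_sym _ PQ QP CP).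
Qed.
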